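(* Let $d=\infty$, $C>0$, and let ${\boldsymbol\gamma}$ be product weights with $\sum_{j\in\mathbb N}\gamma_j<\infty$, and let $p=\mathrm{decay}((\gamma_j)_{j\in\mathbb N})$. Then $$\mathrm{decay}(T^\uparrow_{\infty,C}{\boldsymbol\gamma})=\mathrm{decay}({\boldsymbol\gamma})=p.$$
   Context: $\mathcal U_\infty$ is the set of finite subsets of $\mathbb N$; weights are families $(\gamma_u)_{u\in\mathcal U_\infty}$ of non-negative reals. Product weights: $\gamma_u=\prod_{j\in u}\gamma_j$ ($\gamma_\emptyset=1$) for a non-increasing sequence $(\gamma_j)_{j\in\mathbb N}$ of non-negative reals. For a family $(a_v)_{v\in V}$ of non-negative reals over a countably infinite index set, $\mathrm{decay}((a_v))=\sup\{\tau>0:\sum_va_v^{1/\tau}<\infty\}$, $\sup\emptyset=0$. For $C>0$: $(T^\uparrow_{\infty,C}{\boldsymbol\gamma})_u=\sum_{v\in\mathcal U_\infty,\,v\supseteq u}C^{2|v|}\gamma_v$ (well defined since $\sum_vC^{2|v|}\gamma_v<\infty$ here). *)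

From HB Require Import structures.
From mathcomp Require Import all_boot all_order all_algebra finmap.
From mathcomp Require Import all_classical all_reals all_analysis.
Set Implicit Arguments. Unset Strict Implicit. Unset Printing Implicit Defensive.
Import Order.TTheory GRing.Theory Num.Theory.
Local Open Scope classical_set_scope.
Local Open Scope ring_scope.

Section Defs.
Variable R : realType.

Definition decay {T : choiceType} (a : T -> R) : \bar R :=
  ereal_sup ([set (tau%:E) | tau in
     [set tau : R | 0 < tau /\
        (\esum_(v in [set: T]) ((powR (a v) tau^-1)%:E) < +oo)%E]]
   `|` [set 0%E]).

Definition prod_weights (gamma : nat -> R) (u : {fset nat}) : R :=
  \prod_(j <- u) gamma j.

(* (T^up_{oo,C} gamma)_u = sum_{v finite, v ⊇ u} C^{2|v|} gamma_v
   (the sum is finite under the standing assumptions; fine takes the real value) *)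
Definition Tup (C : R) (w : {fset nat} -> R) (u : {fset nat}) : R :=
  fine (\esum_(v in [set v : {fset nat} | fsubset u v])
          ((C ^+ (2 * #|` v|)%N * w v)%:E))%E.

End Defs.

From HB Require Import structures.
From mathcomp Require Import all_boot all_order all_algebra finmap.
From mathcomp Require Import all_classical all_reals all_analysis.
Import Order.TTheory GRing.Theory Num.Theory.
Local Open Scope classical_set_scope.
Local Open Scope ring_scope.

(* Put b_j = C^2 gamma_j, so that C^(2|v|) gamma_v = b_v.  For non-negative
   summable weights a, the sum of a_u over any family of finite sets u is at
   most prod_j (1 + a_j) <= exp (sum_j a_j).  This gives, for every exponent
   s > 0, that (gamma_u)^s = prod_(j in u) gamma_j^s is summable iff gamma^s
   is, and that b_j <= (T gamma)_{{j}} while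
   (T gamma)_u <= exp (sum_j b_j) * b_u, so T gamma is s-summable iff gamma
   is.  The three families thus have the same set of summability exponents,
   hence the same decay. *)

Section SummablePowers.
Context {R : realType}.

Lemma le_esum_subset (T : choiceType) (A B : set T) (f : T -> \bar R) :
  A `<=` B -> (forall x, (0 <= f x)%E) ->
  (\esum_(x in A) f x <= \esum_(x in B) f x)%E.
Proof.
move=> AB f0; apply: ge_ereal_sup => _ [X [finX XA] <-]; apply: esum_ge.
by exists X => //; split => //; exact: subset_trans XA AB.
Qed.

Lemma esumZl_le {T : choiceType} {P : set T} {c : R} {f : T -> \bar R} :
  0 <= c -> (forall x, (0 <= f x)%E) ->
  (\esum_(x in P) (c%:E * f x) <= c%:E * \esum_(x in P) f x)%E.
Proof.
move=> c0 f0; apply: ge_ereal_sup => _ [X [finX XP] <-].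
rewrite -ge0_mule_fsumr //; apply: lee_wpmul2l; first by rewrite lee_fin.
by apply: esum_ge; exists X.
Qed.

Lemma fsum_le_esum (T : choiceType) (a : T -> R) (L : seq T) :
  (forall j, 0 <= a j) -> uniq L ->
  ((\sum_(j <- L) a j)%:E <= \esum_(j in [set: T]) (a j)%:E)%E.
Proof.
move=> a0 uL; apply: esum_ge; exists [set` L].
  by split => //; exact: finite_seq.
by rewrite -sumEFin (fsbig_seq _ _ uL).
Qed.

Definition summable_pow {T : choiceType} (a : T -> R) (s : R) : Prop :=
  (\esum_(v in [set: T]) (a v `^ s)%:E < +oo)%E.

Lemma eq_decay (T1 T2 : choiceType) (a1 : T1 -> R) (a2 : T2 -> R) :
  (forall s, 0 < s -> summable_pow a1 s <-> summable_pow a2 s) ->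
  decay a1 = decay a2.
Proof.
move=> E; rewrite /decay; congr (ereal_sup (_ `|` _)).
by apply/seteqP; split => _ [t [t0 H] <-]; exists t => //; split => //;
  apply/(E t^-1); rewrite ?invr_gt0.
Qed.

Lemma summable_pow_le {T : choiceType} (a b : T -> R) (c s : R) :
  0 <= s -> 0 <= c -> (forall v, 0 <= a v) -> (forall v, 0 <= b v) ->
  (forall v, a v <= c * b v) -> summable_pow b s -> summable_pow a s.
Proof.
move=> s0 c0 a0 b0 ab bs; rewrite /summable_pow.
have pow_ge0 (x : R) : (0 <= (x `^ s)%:E)%E by rewrite lee_fin powR_ge0.
apply: (@le_lt_trans _ _ ((c `^ s)%:E * \esum_(v in [set: T]) (b v `^ s)%:E)%E).
  apply: le_trans _ (esumZl_le (powR_ge0 c s) (fun v => pow_ge0 (b v))).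
  apply: le_esum => v _; rewrite -EFinM lee_fin -powRM //.
  by apply: ge0_ler_powR => //; rewrite nnegrE ?mulr_ge0.
by rewrite lte_mul_pinfty ?lee_fin ?powR_ge0.
Qed.

Lemma summable_pow_comp {T1 T2 : choiceType} (a : T2 -> R) (f : T1 -> T2) (s : R) :
  injective f -> summable_pow a s -> summable_pow (a \o f) s.
Proof.
move=> f_inj; apply: le_lt_trans.
rewrite -(esum_image [set: T1] f (fun v => (a v `^ s)%:E)).
  by apply: le_esum_subset => // v; rewrite lee_fin powR_ge0.
by move=> ? ? _ _ /f_inj.
Qed.

End SummablePowers.

Section ProductWeights.
Context {R : realType}.
Implicit Types (a b : nat -> R) (u v : {fset nat}).

Lemma prod_weights_ge0 a u : (forall j, 0 <= a j) -> 0 <= prod_weights a u.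
Proof. by move=> a0; apply: prodr_ge0. Qed.

Lemma prod_weights1 a j : prod_weights a [fset j]%fset = a j.
Proof. exact: big_seq_fset1. Qed.

Lemma prod_weightsZ (c : R) a u :
  prod_weights (fun j => c * a j) u = c ^+ #|` u| * prod_weights a u.
Proof.
by rewrite /prod_weights big_split /= big_const_seq count_predT iter_mulr_1.
Qed.

Lemma prod_weights_powR a u (s : R) : (forall j, 0 <= a j) ->
  prod_weights a u `^ s = prod_weights (fun j => a j `^ s) u.
Proof.
move=> a0; rewrite /prod_weights; elim: (enum_fset u) => [|j r IH].
  by rewrite !big_nil powR1.
by rewrite !big_cons powRM ?IH //; exact: prodr_ge0.
Qed.

Lemma prod_weights_fsetD a u v : fsubset u v ->
  prod_weights a v = prod_weights a u * prod_weights a (v `\` u)%fset.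
Proof.
move=> uv; rewrite /prod_weights (big_fsetID _ (mem u)) /=.
congr (_ * _); apply: eq_fbigl => j; rewrite !inE /=; last by rewrite andbC.
by apply/andP/idP => [[] //|ju]; split => //; exact: (fsubsetP uv).
Qed.

Lemma sum_prod_weights_le a (L : seq nat) (F : seq {fset nat}) :
  (forall j, 0 <= a j) -> uniq F -> (forall u, u \in F -> {subset u <= L}) ->
  \sum_(u <- F) prod_weights a u <= \prod_(j <- L) (1 + a j).
Proof.
move=> a0; elim: L F => [|x L IH] F uF sF.
  have F0 u : u \in F -> u = fset0.
    by move=> Fu; apply/fsetP => j; rewrite inE; apply/negbTE/negP => /(sF u Fu).
  have : (size F <= 1)%N.
    by apply: (@uniq_leq_size _ _ [:: fset0]) => // u /F0 ->; rewrite inE.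
  case: F F0 {uF sF} => [_ _|u [|w F] F0 //]; first by rewrite !big_nil ler01.
  by rewrite big_seq1 big_nil (F0 u) ?mem_head // /prod_weights big_seq_fset0.
have P0 : 0 <= \prod_(j <- L) (1 + a j).
  by apply: prodr_ge0 => j _; rewrite addr_ge0.
(* Sets avoiding x use the factor 1 of (1 + a x); sets containing x use a x,
   times the bound for u `\ x. *)
rewrite (bigID (fun u : {fset nat} => x \in u)) /= big_cons mulrDl mul1r addrC.
apply: lerD.
  rewrite -big_filter; apply: IH; first exact: filter_uniq.
  move=> u; rewrite mem_filter => /andP[xu Fu] j ju.
  by have := sF u Fu j ju; rewrite inE => /orP[/eqP jx|//]; rewrite -jx ju in xu.
rewrite (eq_bigr (fun u => a x * prod_weights a (u `\ x)%fset)); last first.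
  by move=> u xu; rewrite /prod_weights (big_fsetD1 x).
rewrite -mulr_sumr; apply: ler_wpM2l => //.
have -> : \sum_(u <- F | x \in u) prod_weights a (u `\ x)%fset =
    \sum_(w <- [seq (u `\ x)%fset | u <- F & x \in u]) prod_weights a w.
  by rewrite big_map big_filter.
apply: IH.
  rewrite map_inj_in_uniq ?filter_uniq // => u v.
  rewrite !mem_filter => /andP[xu _] /andP[xv _] e.
  by rewrite -(fsetD1K xu) -(fsetD1K xv) e.
move=> w /mapP[u]; rewrite mem_filter => /andP[xu Fu] -> j.
rewrite in_fsetD1 => /andP[jx ju].
by have := sF u Fu j ju; rewrite inE (negbTE jx).
Qed.

Lemma esum_prod_weights_le a (S : R) (P : set {fset nat}) :
  (forall j, 0 <= a j) -> (\esum_(j in [set: nat]) (a j)%:E <= S%:E)%E ->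
  (\esum_(u in P) (prod_weights a u)%:E <= (expR S)%:E)%E.
Proof.
move=> a0 aS; apply: ge_ereal_sup => _ [X [finX _] <-].
rewrite fsbig_finite //= sumEFin lee_fin.
set L := undup (flatten (map (fun u : {fset nat} => enum_fset u) (fset_set X))).
apply: le_trans (_ : \prod_(j <- L) (1 + a j) <= _).
  apply: sum_prod_weights_le => //; first exact: fset_uniq.
  by move=> u uX j ju; rewrite mem_undup; apply/flatten_mapP; exists u.
apply: le_trans (_ : \prod_(j <- L) expR (a j) <= _).
  by apply: ler_prod => j _; rewrite addr_ge0 //= expR_ge1Dx.
rewrite -expR_sum ler_expR -lee_fin; apply: le_trans aS.
exact/fsum_le_esum/undup_uniq.
Qed.

Lemma esum_prod_weights_lty a (P : set {fset nat}) : (forall j, 0 <= a j) ->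
  (\esum_(j in [set: nat]) (a j)%:E < +oo)%E ->
  (\esum_(u in P) (prod_weights a u)%:E < +oo)%E.
Proof.
move=> a0 afin; set S := fine (\esum_(j in [set: nat]) (a j)%:E).
apply: le_lt_trans (ltry (expR S)); apply: esum_prod_weights_le => //.
rewrite fineK // ge0_fin_numE // esum_ge0 // => j _; exact: a0.
Qed.

Lemma summable_pow_prod_weights a (s : R) : (forall j, 0 <= a j) ->
  summable_pow (prod_weights a) s <-> summable_pow a s.
Proof.
move=> a0; split => [|sa].
  have pw1 : prod_weights a \o (fun j => [fset j]%fset) = a.
    by apply/funext => j; exact: prod_weights1.
  by rewrite -[in X in _ -> X]pw1; exact: summable_pow_comp (@fset1_inj _).
rewrite /summable_pow; under eq_esum do rewrite prod_weights_powR //.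
by apply: esum_prod_weights_lty => // j; exact: powR_ge0.
Qed.

Lemma esum_supsets_prod_weights_le a (S : R) u :
  (forall j, 0 <= a j) -> (\esum_(j in [set: nat]) (a j)%:E <= S%:E)%E ->
  (\esum_(v in [set v | fsubset u v]) (prod_weights a v)%:E
    <= (prod_weights a u * expR S)%:E)%E.
Proof.
move=> a0 aS.
have -> : \esum_(v in [set v | fsubset u v]) (prod_weights a v)%:E =
    \esum_(v in [set v | fsubset u v])
      ((prod_weights a u)%:E * (prod_weights a (v `\` u)%fset)%:E)%E.
  by apply: eq_esum => v uv; rewrite -EFinM -prod_weights_fsetD.
have pw0 v : (0 <= (prod_weights a v)%:E)%E by rewrite lee_fin prod_weights_ge0.
apply: le_trans
  (esumZl_le (prod_weights_ge0 _ u a0) (fun v => pw0 (v `\` u)%fset)) _.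
rewrite EFinM; apply: lee_wpmul2l => //.
rewrite -(esum_image _ (fun v => v `\` u)%fset (fun w => (prod_weights a w)%:E)).
  exact: esum_prod_weights_le.
move=> v1 v2 /set_mem/fsetIidPr u1 /set_mem/fsetIidPr u2 e.
by rewrite -(fsetID u v1) -(fsetID u v2) u1 u2 e.
Qed.

End ProductWeights.

Section UpwardSums.
Context {R : realType}.
Variables (C : R) (gamma : nat -> R).
Hypotheses (C_gt0 : 0 < C) (gamma_ge0 : forall j, 0 <= gamma j)
  (gamma_fin : (\esum_(j in [set: nat]) (gamma j)%:E < +oo)%E).

Let b j := C ^+ 2 * gamma j.

Let b_ge0 j : 0 <= b j.
Proof. by rewrite mulr_ge0 // ltW // exprn_gt0. Qed.

Let Sb := fine (\esum_(j in [set: nat]) (b j)%:E).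

Let esum_b_le : (\esum_(j in [set: nat]) (b j)%:E <= Sb%:E)%E.
Proof.
have gamma0 j : (0 <= (gamma j)%:E)%E by rewrite lee_fin.
have b_fin : (\esum_(j in [set: nat]) (b j)%:E < +oo)%E.
  under eq_esum do rewrite EFinM.
  apply: le_lt_trans (esumZl_le (ltW (exprn_gt0 2 C_gt0)) gamma0) _.
  by rewrite lte_mul_pinfty ?lee_fin ?exprn_ge0 ?ltW.
by rewrite fineK // ge0_fin_numE // esum_ge0 // => j _; rewrite lee_fin.
Qed.

Lemma Tup_prod_weightsE u :
  (Tup C (prod_weights gamma) u)%:E =
  (\esum_(v in [set v | fsubset u v]) (prod_weights b v)%:E)%E.
Proof.
rewrite /Tup; under eq_esum do rewrite exprM -prod_weightsZ.
rewrite fineK // ge0_fin_numE; last first.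
  by apply: esum_ge0 => v _; rewrite lee_fin prod_weights_ge0.
exact: le_lt_trans (esum_supsets_prod_weights_le _ _ u b_ge0 esum_b_le) (ltry _).
Qed.

Lemma Tup_ge0 u : 0 <= Tup C (prod_weights gamma) u.
Proof.
rewrite -lee_fin Tup_prod_weightsE esum_ge0 // => v _.
by rewrite lee_fin prod_weights_ge0.
Qed.

Lemma Tup_le u : Tup C (prod_weights gamma) u <= expR Sb * prod_weights b u.
Proof.
by rewrite mulrC -lee_fin Tup_prod_weightsE; exact: esum_supsets_prod_weights_le.
Qed.

Lemma Tup_fset1_ge j : b j <= Tup C (prod_weights gamma) [fset j]%fset.
Proof.
rewrite -lee_fin Tup_prod_weightsE; apply: esum_ge; exists [set [fset j]%fset].
  by split; [exact: finite_set1 | move=> v ->; exact: fsubset_refl].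
by rewrite fsbig_set1 prod_weights1.
Qed.

Lemma summable_pow_Tup s : 0 <= s ->
  summable_pow (Tup C (prod_weights gamma)) s <-> summable_pow gamma s.
Proof.
have C2_gt0 : 0 < C ^+ 2 by rewrite exprn_gt0.
have C2inv_ge0 : 0 <= C ^- 2 by rewrite invr_ge0 ltW.
move=> s0; split.
  move/(summable_pow_comp _ (fun j => [fset j]%fset) _ (@fset1_inj _)).
  apply: (summable_pow_le _ _ _ _ s0 C2inv_ge0 gamma_ge0) => // j.
    exact: Tup_ge0.
  by rewrite ler_pdivlMl //; exact: Tup_fset1_ge.
move=> /(summable_pow_le _ _ _ _ s0 (ltW C2_gt0) b_ge0 gamma_ge0 (fun j => lexx _)).
move/(summable_pow_prod_weights _ _ b_ge0).
exact: (summable_pow_le _ _ _ _ s0 (expR_ge0 Sb) Tup_ge0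
  (fun u => prod_weights_ge0 _ u b_ge0) Tup_le).
Qed.

End UpwardSums.

Theorem mainTheorem11 (R : realType) (C : R) (gamma : nat -> R) :
  0 < C ->
  (forall j, 0 <= gamma j) ->
  (forall i j, (i <= j)%N -> gamma j <= gamma i) ->
  (\esum_(j in [set: nat]) (gamma j)%:E < +oo)%E ->
  decay (Tup C (prod_weights gamma)) = decay (prod_weights gamma) /\
  decay (prod_weights gamma) = decay gamma.
Proof.
move=> C_gt0 gamma_ge0 _ gamma_fin.
have pw_gamma s : summable_pow (prod_weights gamma) s <-> summable_pow gamma s.
  exact: summable_pow_prod_weights.
split; apply: eq_decay => s s_gt0; last exact: pw_gamma.
have Tup_gamma := summable_pow_Tup _ _ C_gt0 gamma_ge0 gamma_fin _ (ltW s_gt0).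
by split=> [/Tup_gamma/pw_gamma | /pw_gamma/Tup_gamma].
Qed.
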